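(* Let $\Gamma$ be a Hintikka set for $\mathbb{T}_1$. Then there exists $\nu\in\mathcal{F}_{C_1}$ such that $\nu(\varphi)=L$ for every signed formula $\mathsf{L}(\varphi)\in\Gamma$ (where the label $\mathsf{T},\mathsf{t},\mathsf{F}$ corresponds to the value $T,t,F$).
   Context: $\Sigma$ has unary $\neg$ and binary $\wedge,\vee,\to$. $\mathcal{A}_{C_1}$ is the $\Sigma$-multialgebra on $\{F,t,T\}$, $D=\{t,T\}$: $F\tilde\vee F=\{F\}$, $F\tilde\vee T=T\tilde\vee F=T\tilde\vee T=\{T\}$, $x\tilde\vee y=D$ if $t\in\{x,y\}$; $x\tilde\wedge y=\{F\}$ if $F\in\{x,y\}$, $T\tilde\wedge T=\{T\}$, $t\tilde\wedge t=t\tilde\wedge T=T\tilde\wedge t=D$; $\tilde\neg F=\{T\}$, $\tilde\neg t=D$, $\tilde\neg T=\{F\}$; $F\tilde\to F=F\tilde\to T=T\tilde\to T=\{T\}$, $t\tilde\to F=T\tilde\to F=\{F\}$, $x\tilde\to t=D$, $t\tilde\to T=D$. Valuations: maps $\nu$ from formulas to $\{F,t,T\}$ with $\nu(\neg\alpha)\in\tilde\neg\nu(\alpha)$, $\nu(\alpha\#\beta)\in\nu(\alpha)\tilde\#\nu(\beta)$; $\mathcal{F}_{C_1}$ = valuations with $\nu(\alpha)=t\Rightarrow\nu(\alpha\wedge\neg\alpha)=T$. Signed formulas are $\mathsf{L}(\varphi)$ with $\mathsf{L}\in\{\mathsf{T},\mathsf{t},\mathsf{F}\}$. A nonempty set $\Gamma$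 of signed formulas is a Hintikka set for $\mathbb{T}_1$ if: (1) $\mathsf{L}(\varphi),\mathsf{L}'(\varphi)\in\Gamma$ imply $\mathsf{L}=\mathsf{L}'$; (2) no $\mathsf{t}(\varphi\wedge\neg\varphi)$ is in $\Gamma$; (3) $\mathsf{T}(\neg\varphi)\in\Gamma\Rightarrow\mathsf{F}(\varphi)\in\Gamma$ or $\mathsf{t}(\varphi)\in\Gamma$; (4) $\mathsf{t}(\neg\varphi)\in\Gamma\Rightarrow\mathsf{t}(\varphi)\in\Gamma$; (5) $\mathsf{F}(\neg\varphi)\in\Gamma\Rightarrow\mathsf{T}(\varphi)\in\Gamma$; (6) $\mathsf{T}(\varphi\wedge\psi)\in\Gamma\Rightarrow$ $\Gamma$ contains $\mathsf{X}(\varphi)$ and $\mathsf{Y}(\psi)$ for some $\mathsf{X},\mathsf{Y}\in\{\mathsf{T},\mathsf{t}\}$; (7) $\mathsf{t}(\varphi\wedge\psi)\in\Gamma\Rightarrow$ $\Gamma$ contains $\mathsf{T}\varphi,\mathsf{t}\psi$, or $\mathsf{t}\varphi,\mathsf{T}\psi$, or $\mathsf{t}\varphi,\mathsf{t}\psi$; (8) $\mathsf{F}(\varphi\wedge\psi)\in\Gamma\Rightarrow\mathsf{F}(\varphi)\in\Gamma$ or $\mathsf{F}(\psi)\in\Gamma$; (9) $\mathsf{T}(\varphi\vee\psi)\in\Gamma\Rightarrow$ one of $\mathsf{T}\varphi,\mathsf{t}\varphi,\mathsf{T}\psi,\mathsf{t}\psi$ is in $\Gamma$; (10) $\mathsf{t}(\varphi\vee\psi)\in\Gamma\Rightarrow\mathsf{t}(\varphi)\in\Gamma$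 or $\mathsf{t}(\psi)\in\Gamma$; (11) $\mathsf{F}(\varphi\vee\psi)\in\Gamma\Rightarrow\mathsf{F}(\varphi),\mathsf{F}(\psi)\in\Gamma$; (12) $\mathsf{T}(\varphi\to\psi)\in\Gamma\Rightarrow$ one of $\mathsf{F}\varphi,\mathsf{T}\psi,\mathsf{t}\psi$ is in $\Gamma$; (13) $\mathsf{t}(\varphi\to\psi)\in\Gamma\Rightarrow$ either $\mathsf{t}\varphi,\mathsf{T}\psi\in\Gamma$ or $\mathsf{t}\psi\in\Gamma$; (14) $\mathsf{F}(\varphi\to\psi)\in\Gamma\Rightarrow$ either $\mathsf{T}\varphi,\mathsf{F}\psi\in\Gamma$ or $\mathsf{t}\varphi,\mathsf{F}\psi\in\Gamma$. *)

Inductive formula : Type :=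
  | Var : nat -> formula
  | Neg : formula -> formula
  | And : formula -> formula -> formula
  | Or  : formula -> formula -> formula
  | Imp : formula -> formula -> formula.

Inductive val3 : Type := vF | vt | vT.

Definition designated (x : val3) : Prop := x = vt \/ x = vT.

(* Multioperations of A_{C1}, as membership relations: y \in op x1 x2. *)
Definition mneg (x y : val3) : Prop :=
  match x with
  | vF => y = vT
  | vt => designated y
  | vT => y = vF
  end.

Definition mor (x1 x2 y : val3) : Prop :=
  match x1, x2 with
  | vt, _ | _, vt => designated y
  | vF, vF => y = vF
  | _, _ => y = vT
  end.

Definition mand (x1 x2 y : val3) : Prop :=
  match x1, x2 with
  | vF, _ | _, vF => y = vF
  | vT, vT => y = vT
  | _, _ => designated y
  end.

Definition mimp (x1 x2 y : val3) : Prop :=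
  match x1, x2 with
  | _, vt => designated y
  | vF, vF => y = vT
  | vF, vT => y = vT
  | vT, vT => y = vT
  | vt, vF => y = vF
  | vT, vF => y = vF
  | vt, vT => designated y
  end.

Definition valuation (nu : formula -> val3) : Prop :=
  forall a b : formula,
    mneg (nu a) (nu (Neg a)) /\
    mand (nu a) (nu b) (nu (And a b)) /\
    mor  (nu a) (nu b) (nu (Or a b)) /\
    mimp (nu a) (nu b) (nu (Imp a b)).

Definition F_C1 (nu : formula -> val3) : Prop :=
  valuation nu /\
  (forall a : formula, nu a = vt -> nu (And a (Neg a)) = vT).

Inductive label : Type := LT | Lt | LF.

Definition signed := (label * formula)%type.

Definition label_val (L : label) : val3 :=
  match L with LT => vT | Lt => vt | LF => vF end.

(* Hintikka sets for T_1, following conditions (1)-(14). *)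
Definition Hintikka (G : signed -> Prop) : Prop :=
  (exists s, G s) /\
  (forall L L' p, G (L, p) -> G (L', p) -> L = L') /\
  (forall p, ~ G (Lt, And p (Neg p))) /\
  (forall p, G (LT, Neg p) -> G (LF, p) \/ G (Lt, p)) /\
  (forall p, G (Lt, Neg p) -> G (Lt, p)) /\
  (forall p, G (LF, Neg p) -> G (LT, p)) /\
  (forall p q, G (LT, And p q) ->
               exists X Y, (X = LT \/ X = Lt) /\ (Y = LT \/ Y = Lt) /\
                           G (X, p) /\ G (Y, q)) /\
  (forall p q, G (Lt, And p q) ->
               (G (LT, p) /\ G (Lt, q)) \/ (G (Lt, p) /\ G (LT, q)) \/
               (G (Lt, p) /\ G (Lt, q))) /\
  (forall p q, G (LF, And p q) -> G (LF, p) \/ G (LF, q)) /\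
  (forall p q, G (LT, Or p q) ->
               G (LT, p) \/ G (Lt, p) \/ G (LT, q) \/ G (Lt, q)) /\
  (forall p q, G (Lt, Or p q) -> G (Lt, p) \/ G (Lt, q)) /\
  (forall p q, G (LF, Or p q) -> G (LF, p) /\ G (LF, q)) /\
  (forall p q, G (LT, Imp p q) ->
               G (LF, p) \/ G (LT, q) \/ G (Lt, q)) /\
  (forall p q, G (Lt, Imp p q) ->
               (G (Lt, p) /\ G (LT, q)) \/ G (Lt, q)) /\
  (forall p q, G (LF, Imp p q) ->
               (G (LT, p) /\ G (LF, q)) \/ (G (Lt, p) /\ G (LF, q))).

From Stdlib Require Import Classical ClassicalEpsilon.

(* A Hintikka set G is extended to a valuation by recursion on
   formulas: a formula that carries a label in G receives the value of that
   label (well defined by clause (1)); an unlabelled formula receives a fixed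
   element of the multioperation applied to the values of its immediate
   subformulas. *)

Definition choose_neg (x : val3) : val3 :=
  match x with vT => vF | _ => vT end.
Definition choose_and (x y : val3) : val3 :=
  match x, y with vF, _ | _, vF => vF | _, _ => vT end.
Definition choose_or (x y : val3) : val3 :=
  match x, y with vF, vF => vF | _, _ => vT end.
Definition choose_imp (x y : val3) : val3 :=
  match x, y with _, vt => vT | vt, vF | vT, vF => vF | _, _ => vT end.

Lemma choose_neg_sound (x : val3) : mneg x (choose_neg x).
Proof. destruct x; cbv; auto. Qed.

Lemma choose_and_sound (x y : val3) : mand x y (choose_and x y).
Proof. destruct x, y; cbv; auto. Qed.

Lemma choose_or_sound (x y : val3) : mor x y (choose_or x y).
Proof. destruct x, y; cbv; auto. Qed.

Lemma choose_imp_sound (x y : val3) : mimp x y (choose_imp x y).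
Proof. destruct x, y; cbv; auto. Qed.

(* The choice for conjunction makes a conjunction of t with a designated value
   equal to T; this is what the C1-condition needs at unlabelled formulas. *)
Lemma choose_and_t_designated (y : val3) : designated y -> choose_and vt y = vT.
Proof. intros [-> | ->]; reflexivity. Qed.

Section HintikkaValuation.

Variable G : signed -> Prop.

Definition label_of (p : formula) : option label :=
  match excluded_middle_informative (exists L, G (L, p)) with
  | left h => Some (proj1_sig (constructive_indefinite_description _ h))
  | right _ => None
  end.

Lemma label_of_Some (p : formula) (L : label) : label_of p = Some L -> G (L, p).
Proof.
  unfold label_of; destruct excluded_middle_informative as [h | h]; intro E.
  - injection E as <-; exact (proj2_sig (constructive_indefinite_description _ h)).
  - discriminate.
Qed.

Lemma label_of_None (p : formula) (L : label) : label_of p = None -> ~ G (L, p).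
Proof.
  unfold label_of; destruct excluded_middle_informative as [h | h]; intro E.
  - discriminate.
  - intro g; apply h; exists L; exact g.
Qed.

Definition default_val (rec : formula -> val3) (p : formula) : val3 :=
  match p with
  | Var _ => vF
  | Neg a => choose_neg (rec a)
  | And a b => choose_and (rec a) (rec b)
  | Or a b => choose_or (rec a) (rec b)
  | Imp a b => choose_imp (rec a) (rec b)
  end.

(* The valuation induced by G: labels first, choice functions otherwise
   (the body is [default_val hintikka_val p], unfolded for the guard checker). *)
Fixpoint hintikka_val (p : formula) : val3 :=
  match label_of p with
  | Some L => label_val L
  | None =>
    match p with
    | Var _ => vF
    | Neg a => choose_neg (hintikka_val a)
    | And a b => choose_and (hintikka_val a) (hintikka_val b)
    | Or a b => choose_or (hintikka_val a) (hintikka_val b)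
    | Imp a b => choose_imp (hintikka_val a) (hintikka_val b)
    end
  end.

Lemma hintikka_val_eq (p : formula) :
  hintikka_val p =
  match label_of p with
  | Some L => label_val L
  | None => default_val hintikka_val p
  end.
Proof. destruct p; reflexivity. Qed.

Lemma hintikka_val_unlabelled (p : formula) :
  (forall L, ~ G (L, p)) -> hintikka_val p = default_val hintikka_val p.
Proof.
  intro free; rewrite hintikka_val_eq.
  destruct (label_of p) as [L |] eqn:E; [| reflexivity].
  exfalso; exact (free L (label_of_Some p L E)).
Qed.

Hypothesis HG : Hintikka G.

Lemma hintikka_val_label (L : label) (p : formula) :
  G (L, p) -> hintikka_val p = label_val L.
Proof.
  intro g; rewrite hintikka_val_eq.
  destruct (label_of p) as [L' |] eqn:E.
  - destruct HG as (_ & functional & _).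
    rewrite (functional _ _ _ (label_of_Some p L' E) g); reflexivity.
  - exfalso; exact (label_of_None p L E g).
Qed.

Lemma hintikka_val_cases (p : formula) :
  (exists L, G (L, p)) \/ hintikka_val p = default_val hintikka_val p.
Proof.
  destruct (classic (exists L, G (L, p))) as [h | h]; [left; exact h | right].
  apply hintikka_val_unlabelled; intros L g; apply h; exists L; exact g.
Qed.

Local Notation nu := hintikka_val.
Local Notation lab := hintikka_val_label.

Lemma hintikka_val_neg (a : formula) : mneg (nu a) (nu (Neg a)).
Proof.
  destruct (hintikka_val_cases (Neg a)) as [[L g] | ->]; [| apply choose_neg_sound].
  destruct HG as (_ & _ & _ & negT & negt & negF & _).
  rewrite (lab _ _ g); destruct L; simpl.
  - destruct (negT _ g) as [h | h]; rewrite (lab _ _ h); cbv; auto.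
  - rewrite (lab _ _ (negt _ g)); cbv; auto.
  - rewrite (lab _ _ (negF _ g)); reflexivity.
Qed.

Lemma hintikka_val_and (a b : formula) : mand (nu a) (nu b) (nu (And a b)).
Proof.
  destruct (hintikka_val_cases (And a b)) as [[L g] | ->]; [| apply choose_and_sound].
  destruct HG as (_ & _ & _ & _ & _ & _ & andT & andt & andF & _).
  rewrite (lab _ _ g); destruct L; simpl.
  - destruct (andT _ _ g) as (X & Y & [-> | ->] & [-> | ->] & ha & hb);
      rewrite (lab _ _ ha), (lab _ _ hb); cbv; auto.
  - destruct (andt _ _ g) as [[ha hb] | [[ha hb] | [ha hb]]];
      rewrite (lab _ _ ha), (lab _ _ hb); cbv; auto.
  - destruct (andF _ _ g) as [h | h]; rewrite (lab _ _ h);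
      [| destruct (nu a)]; reflexivity.
Qed.

Lemma hintikka_val_or (a b : formula) : mor (nu a) (nu b) (nu (Or a b)).
Proof.
  destruct (hintikka_val_cases (Or a b)) as [[L g] | ->]; [| apply choose_or_sound].
  destruct HG as (_ & _ & _ & _ & _ & _ & _ & _ & _ & orT & ort & orF & _).
  rewrite (lab _ _ g); destruct L; simpl.
  - destruct (orT _ _ g) as [h | [h | [h | h]]]; rewrite (lab _ _ h);
      [destruct (nu b) | destruct (nu b) | destruct (nu a) | destruct (nu a)];
      cbv; auto.
  - destruct (ort _ _ g) as [h | h]; rewrite (lab _ _ h);
      [destruct (nu b) | destruct (nu a)]; cbv; auto.
  - destruct (orF _ _ g) as [ha hb]; rewrite (lab _ _ ha), (lab _ _ hb); reflexivity.
Qed.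

Lemma hintikka_val_imp (a b : formula) : mimp (nu a) (nu b) (nu (Imp a b)).
Proof.
  destruct (hintikka_val_cases (Imp a b)) as [[L g] | ->]; [| apply choose_imp_sound].
  destruct HG as (_ & _ & _ & _ & _ & _ & _ & _ & _ & _ & _ & _ & impT & impt & impF).
  rewrite (lab _ _ g); destruct L; simpl.
  - destruct (impT _ _ g) as [h | [h | h]]; rewrite (lab _ _ h);
      [destruct (nu b) | destruct (nu a) | destruct (nu a)]; cbv; auto.
  - destruct (impt _ _ g) as [[ha hb] | h].
    + rewrite (lab _ _ ha), (lab _ _ hb); cbv; auto.
    + rewrite (lab _ _ h); destruct (nu a); cbv; auto.
  - destruct (impF _ _ g) as [[ha hb] | [ha hb]];
      rewrite (lab _ _ ha), (lab _ _ hb); reflexivity.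
Qed.

Lemma hintikka_val_valuation : valuation nu.
Proof.
  intros a b; repeat split;
    auto using hintikka_val_neg, hintikka_val_and, hintikka_val_or, hintikka_val_imp.
Qed.

(* The C1-condition: a labelled [a /\ ~a] with [nu a = t] must carry T, since
   label t is excluded by (2) and label F forces [a] to be F or T by (8), (5). *)
Lemma hintikka_val_C1 (a : formula) : nu a = vt -> nu (And a (Neg a)) = vT.
Proof.
  intro Ha.
  destruct (hintikka_val_cases (And a (Neg a))) as [[L g] | ->].
  - destruct HG as (_ & _ & no_t & _ & _ & negF & _ & _ & andF & _).
    rewrite (lab _ _ g); destruct L; [reflexivity | exfalso..].
    + exact (no_t _ g).
    + destruct (andF _ _ g) as [h | h].
      * rewrite (lab _ _ h) in Ha; discriminate.
      * rewrite (lab _ _ (negF _ h)) in Ha; discriminate.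
  - unfold default_val; rewrite Ha; apply choose_and_t_designated.
    pose proof (hintikka_val_neg a) as Hneg; rewrite Ha in Hneg; exact Hneg.
Qed.

End HintikkaValuation.

Theorem mainTheorem16 (G : signed -> Prop) :
  Hintikka G ->
  exists nu : formula -> val3,
    F_C1 nu /\ (forall (L : label) (p : formula), G (L, p) -> nu p = label_val L).
Proof.
  intro HG; exists (hintikka_val G); split.
  - split.
    + exact (hintikka_val_valuation G HG).
    + exact (hintikka_val_C1 G HG).
  - exact (hintikka_val_label G HG).
Qed.
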